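(* Let $K$ be a CMI on $X_1,\dots,X_n$ in pure form. Then $K\sim\mathrm{can}(K)$.
   Context: Setting: $X_1,\dots,X_n$ jointly distributed discrete random variables with $H(X_i)<\infty$; distribution unspecified. $X_\alpha=(X_i,i\in\alpha)$, $X_\emptyset$ constant. A CMI is $K=(C,\langle Q_1,\dots,Q_k\rangle)$, $k\ge0$, $C\subseteq\{1,\dots,n\}$, $\langle\cdot\rangle$ an unordered multiset of subsets; it is valid (for a given distribution) if $\sum_{i=1}^kH(X_{Q_i}|X_C)-H(X_{Q_1},\dots,X_{Q_k}|X_C)=0$. Empty members may be deleted. $K\sim K'$: for every joint distribution both valid or both invalid. Degenerate CMIs (always valid) are written $(\cdot,\langle\ \rangle)$. $K$ is in pure form if all $Q_i\ne\emptyset$ and $Q_i\cap C=\emptyset$. Canonical form of pure $K$: $\mathbb I_K$ = set of indices lying in at least two members (distinct positions) of the collection if $k\ge2$, $\emptyset$ otherwise; $P_1,\dots,P_t$ the nonempty sets among $Q_i\setminus\mathbb I_K$ (with multiplicity); $\mathrm{can}(K)=(\cdot,\langle\ \rangle)$ if $k\le1$; $(C,\langle\mathbb I_K,\mathbb I_K\rangle)$ if $k\ge2,\mathbb I_K\ne\emptyset,t\le1$; $(C,\langle P_1,\dots,P_t\rangle)$ if $k\ge2,\mathbb I_K=\emptyset$; $(C,\langle\mathbb I_K,\mathbb I_K,P_1,\dots,P_t\rangle)$ if $k\ge2,\mathbb I_K\ne\emptyset,t\ge2$. *)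

From HB Require Import structures.
From mathcomp Require Import all_boot all_order all_algebra.
From mathcomp Require Import all_classical all_reals.
From mathcomp Require Import ereal esum exp.
Set Implicit Arguments. Unset Strict Implicit. Unset Printing Implicit Defensive.
Import Order.TTheory GRing.Theory Num.Theory.
Local Open Scope classical_set_scope.
Local Open Scope ring_scope.

(* Variables X_1..X_n are indexed by 'I_n.  Every discrete random variable
   takes countably many values, so w.l.o.g. values are in nat; a joint
   distribution is a probability mass function on nat^n. *)
Definition outcome (n : nat) := {ffun 'I_n -> nat}.

Section Entropy.
Variable (R : realType) (n : nat).

Definition is_pmf (p : outcome n -> R) : Prop :=
  (forall x, 0 <= p x) /\ (\esum_(x in [set: outcome n]) (p x)%:E = 1%E).

Definition marg (p : outcome n -> R) (alpha : {set 'I_n}) (y : outcome n) : R :=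
  fine (\esum_(x in [set x : outcome n | forall i, i \in alpha -> x i = y i])
          (p x)%:E).

(* H(X_alpha), as an extended real; values y of X_alpha are encoded as
   outcomes vanishing outside alpha *)
Definition entropy (p : outcome n -> R) (alpha : {set 'I_n}) : \bar R :=
  \esum_(y in [set y : outcome n | forall i, i \notin alpha -> y i = 0%N])
     (- (marg p alpha y * ln (marg p alpha y)))%:E.

Definition joint_dist (p : outcome n -> R) : Prop :=
  is_pmf p /\ forall i : 'I_n, (entropy p [set i] < +oo)%E.

Definition cond_entropy (p : outcome n -> R) (A C : {set 'I_n}) : \bar R :=
  (entropy p (A :|: C) - entropy p C)%E.

(* A CMI (C, <Q_1,...,Q_k>); the multiset is represented by a list *)
Definition CMI := ({set 'I_n} * seq {set 'I_n})%type.

(* sum_i H(X_{Q_i}|X_C) - H(X_{Q_1},...,X_{Q_k}|X_C) = 0 ;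
   the joint variable (X_{Q_1},...,X_{Q_k}) carries the same information
   as X_{Q_1 u ... u Q_k} *)
Definition valid (p : outcome n -> R) (K : CMI) : Prop :=
  ((\sum_(Q <- K.2) cond_entropy p Q K.1)
     - cond_entropy p (\bigcup_(Q <- K.2) Q) K.1)%E = 0%E.

Definition cmi_equiv (K K' : CMI) : Prop :=
  forall p, joint_dist p -> (valid p K <-> valid p K').

End Entropy.

Local Close Scope classical_set_scope.
Local Open Scope set_scope.

Section Canonical.
Variable n : nat.

Definition pure_form (K : CMI n) : Prop :=
  forall Q, Q \in K.2 -> Q != finset.set0 /\ Q :&: K.1 = finset.set0.

Definition intersect_set (K : CMI n) : {set 'I_n} :=
  if (2 <= size K.2)%N then
    [set i | (2 <= count (fun Q : {set 'I_n} => i \in Q) K.2)%N]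
  else finset.set0.

Definition residues (K : CMI n) : seq {set 'I_n} :=
  seq.filter (fun P => P != finset.set0) (map (fun Q => Q :\: intersect_set K) K.2).

Definition degenerate_cmi : CMI n := (finset.set0, [::]).

Definition can (K : CMI n) : CMI n :=
  let I := intersect_set K in
  let Ps := residues K in
  if (size K.2 <= 1)%N then degenerate_cmi
  else if I == finset.set0 then (K.1, Ps)
  else if (size Ps <= 1)%N then (K.1, [:: I; I])
  else (K.1, I :: I :: Ps).

End Canonical.

(* Conditional entropy A |-> H(X_A | X_C) is a polymatroid: it vanishes on the
   empty set, is monotone and is submodular.  Submodularity is ln t <= t - 1
   applied to t = P_A P_B / (P_(A:&:B) P_(A:|:B)), whose expectation is at most 1
   because P_A P_B / P_(A:&:B) has total mass at most 1.
   For a polymatroid f the deficiency sum_i f Q_i - f (U_i Q_i) is nonnegative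
   and dominates f (Q_1 :&: U_(i>1) Q_i) plus the deficiency of the tail, so it
   can only vanish if f vanishes on the set I_K of indices covered twice.
   Removing an f-null set from every member preserves the deficiency, and
   f I = 0 is exactly the vanishing of the deficiency of <I, I>; this is the case
   analysis defining can K. *)

From mathcomp Require Import all_boot all_order all_algebra.
From mathcomp Require Import all_classical all_reals.
From mathcomp Require Import ereal esum exp.
From mathcomp Require Import fintype finset.
From mathcomp Require Import lra.
Set Implicit Arguments. Unset Strict Implicit. Unset Printing Implicit Defensive.
Import Order.TTheory GRing.Theory Num.Theory.
Local Open Scope ring_scope.

Section Polymatroid.
Variables (T : finType) (R : realDomainType).
Implicit Types (f : {set T} -> R) (A B C I P Q : {set T}) (s : seq {set T}).

Record polymatroid f : Prop := Polymatroid {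
  polymatroid0 : f set0 = 0;
  polymatroid_mono : forall A B, A \subset B -> f A <= f B;
  polymatroid_submod : forall A B, f (A :|: B) + f (A :&: B) <= f A + f B }.

Definition contract f C A := f (A :|: C) - f C.

Lemma polymatroid_contract f C : polymatroid f -> polymatroid (contract f C).
Proof.
case=> f0 fmono fsub; split => [|A B AB|A B]; rewrite /contract.
- by rewrite set0U subrr.
- by rewrite lerD2r fmono ?setSU.
have := fsub (A :|: C) (B :|: C).
by rewrite setUACA setUid -setUIl; lra.
Qed.

Definition deficiency f s := \sum_(Q <- s) f Q - f (\bigcup_(Q <- s) Q).

Definition overlap s : {set T} := [set i | 2 <= count (fun Q => i \in Q) s]%N.

Definition strip I s := [seq P <- [seq Q :\: I | Q <- s] | P != set0].

Lemma mem_bigcup_count i s :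
  (i \in \bigcup_(Q <- s) Q) = (0 < count (fun Q => i \in Q) s)%N.
Proof.
elim: s => [|Q s IHs]; first by rewrite big_nil inE.
by rewrite big_cons inE IHs /=; case: (i \in Q).
Qed.

Lemma overlap_cons Q s :
  overlap (Q :: s) \subset (Q :&: \bigcup_(P <- s) P) :|: overlap s.
Proof.
apply/subsetP => i; rewrite !inE /= mem_bigcup_count.
by case: (i \in Q); case: (count _ s) => [|[|k]].
Qed.

Lemma bigcup_strip I s : \bigcup_(P <- strip I s) P = (\bigcup_(Q <- s) Q) :\: I.
Proof.
elim: s => [|Q s IHs]; first by rewrite !big_nil set0D.
rewrite big_cons setDUl -IHs /strip /=.
have [->|_] := eqVneq (Q :\: I) set0; first by rewrite set0U.
by rewrite big_cons.
Qed.

Lemma deficiency_small f s : f set0 = 0 -> (size s <= 1)%N -> deficiency f s = 0.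
Proof.
move=> f0; case: s => [|Q [|//]] _; rewrite /deficiency.
  by rewrite !big_nil f0 subrr.
by rewrite !big_seq1 subrr.
Qed.

Variables (f : {set T} -> R).
Hypothesis fP : polymatroid f.

Lemma polymatroid_ge0 A : 0 <= f A.
Proof. by rewrite -(polymatroid0 fP) (polymatroid_mono fP) ?sub0set. Qed.

Lemma polymatroid_subadd A B : f (A :|: B) <= f A + f B.
Proof. have := polymatroid_submod fP A B; have := polymatroid_ge0 (A :&: B); lra. Qed.

Lemma null_setUl I A : f I = 0 -> f (I :|: A) = f A.
Proof.
move=> fI; apply/eqP; rewrite eq_le (polymatroid_mono fP (subsetUr I A)) andbT.
by have := polymatroid_subadd I A; rewrite fI add0r.
Qed.

Lemma null_setD I A : f I = 0 -> f (A :\: I) = f A.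
Proof.
move=> fI; apply/eqP; rewrite eq_le (polymatroid_mono fP (subsetDl A I)) /=.
rewrite -(null_setUl (A :\: I) fI) (polymatroid_mono fP) //.
by apply/subsetP => i; rewrite !inE; case: (i \in I).
Qed.

Lemma deficiency_cons Q s :
  deficiency f s + f (Q :&: \bigcup_(P <- s) P) <= deficiency f (Q :: s).
Proof.
by rewrite /deficiency !big_cons; have := polymatroid_submod fP Q (\bigcup_(P <- s) P); lra.
Qed.

Lemma deficiency_ge0 s : 0 <= deficiency f s.
Proof.
elim: s => [|Q s IHs]; first by rewrite deficiency_small ?(polymatroid0 fP).
have := deficiency_cons Q s; have := polymatroid_ge0 (Q :&: \bigcup_(P <- s) P); lra.
Qed.

Lemma deficiency0_cons Q s : deficiency f (Q :: s) = 0 ->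
  deficiency f s = 0 /\ f (Q :&: \bigcup_(P <- s) P) = 0.
Proof.
move=> def0; have := deficiency_cons Q s; rewrite def0.
have := deficiency_ge0 s; have := polymatroid_ge0 (Q :&: \bigcup_(P <- s) P).
by split; lra.
Qed.

Lemma deficiency0_overlap s : deficiency f s = 0 -> f (overlap s) = 0.
Proof.
elim: s => [|Q s IHs] def0.
  by rewrite (_ : overlap [::] = set0) ?(polymatroid0 fP) //; apply/setP => i; rewrite !inE.
have [/IHs fI0 fQs0] := deficiency0_cons def0.
apply/eqP; rewrite eq_le polymatroid_ge0 andbT.
apply: le_trans (polymatroid_mono fP (overlap_cons Q s)) _.
by have := polymatroid_subadd (Q :&: \bigcup_(P <- s) P) (overlap s); rewrite fQs0 fI0 addr0.
Qed.

Lemma deficiency_strip I s : f I = 0 -> deficiency f (strip I s) = deficiency f s.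
Proof.
move=> fI; rewrite /deficiency bigcup_strip null_setD //; congr (_ - _).
elim: s => [|Q s IHs]; first by rewrite !big_nil.
rewrite big_cons -(null_setD Q fI) -IHs /strip /=.
have [->|_] := eqVneq (Q :\: I) set0; first by rewrite (polymatroid0 fP) add0r.
by rewrite big_cons.
Qed.

Lemma deficiency0P s :
  deficiency f s = 0 <-> f (overlap s) = 0 /\ deficiency f (strip (overlap s) s) = 0.
Proof.
split => [def0|[fI0 <-]]; last by rewrite deficiency_strip.
by rewrite deficiency_strip (deficiency0_overlap def0).
Qed.

Lemma deficiency0_dup I s :
  deficiency f [:: I, I & s] = 0 <-> f I = 0 /\ deficiency f s = 0.
Proof.
split => [def0|[fI0 defs0]].
  have [/deficiency0_cons[defs0 _] fI0] := deficiency0_cons def0.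
  by rewrite big_cons setIC setUK in fI0.
by rewrite /deficiency !big_cons !null_setUl // fI0 !add0r.
Qed.

End Polymatroid.

Section CanonicalForm.
Variable n : nat.
Implicit Types K : CMI n.

Lemma intersect_setE K : intersect_set K = overlap K.2.
Proof.
rewrite /intersect_set; case: leqP => // small; apply/setP => i.
by rewrite !inE ltn_geF // ltnS (leq_trans (count_size _ _) small).
Qed.

Lemma can_degenerate K : (size K.2 <= 1)%N -> can K = degenerate_cmi n.
Proof. by rewrite /can => ->. Qed.

Lemma can_fst K : (1 < size K.2)%N -> (can K).1 = K.1.
Proof.
by rewrite /can ltnNge => /negPf ->; case: ifP => // _; case: ifP.
Qed.

Lemma deficiency0_can (R : realDomainType) (f : {set 'I_n} -> R) K :
  polymatroid f -> (1 < size K.2)%N ->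
  deficiency f K.2 = 0 <-> deficiency f (can K).2 = 0.
Proof.
move=> fP big; have f0 := polymatroid0 fP.
rewrite /can leqNgt big /= /residues intersect_setE -/(strip _ _) (deficiency0P fP).
have [->|_] := eqVneq (overlap K.2) set0; first by rewrite f0; split => [[]|].
case: leqP => small; rewrite (deficiency0_dup fP) //.
by rewrite !(deficiency_small f0).
Qed.

End CanonicalForm.

Section EsumLemmas.
Local Open Scope classical_set_scope.
Local Open Scope ereal_scope.
Variables (R : realType) (T : choiceType).
Implicit Types (S A B : set T) (g : T -> \bar R).

Lemma le_esum_subset A B g : A `<=` B -> (forall x, 0 <= g x) ->
  \esum_(x in A) g x <= \esum_(x in B) g x.
Proof.
move=> AB g0; rewrite esum_mkcond [leRHS]esum_mkcond.
apply: le_esum => x _; case: ifPn => xA; last by case: ifPn.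
by rewrite ifT // in_setE; apply: AB; rewrite -in_setE.
Qed.

Lemma ge0_esumZl S (c : R) g : (0 <= c)%R -> (forall x, 0 <= g x) ->
  \esum_(x in S) (c%:E * g x) = c%:E * \esum_(x in S) g x.
Proof.
move=> c0 g0; have [->|c_neq0] := eqVneq c 0%R.
  by rewrite mul0e esum1 // => x _; rewrite mul0e.
have c_gt0 : (0 < c)%R by rewrite lt0r c_neq0.
rewrite /esum -ereal_sup_pZl //; congr ereal_sup; apply/seteqP; split.
  move=> _ [F HF <-]; exists (\sum_(x \in F) g x); first by exists F.
  by rewrite ge0_mule_fsumr.
by move=> _ [_ [F HF <-] <-]; exists F => //; rewrite ge0_mule_fsumr.
Qed.

Lemma esum_bigcup_disjoint (J : choiceType) (D : set J) (F : J -> set T) g :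
  (forall j k x, D j -> D k -> F j x -> F k x -> j = k) -> (forall x, 0 <= g x) ->
  \esum_(x in \bigcup_(j in D) F j) g x = \esum_(j in D) \esum_(x in F j) g x.
Proof.
move=> Fdisj g0; rewrite esum_esum //; apply: reindex_esum => //; split.
- by move=> [/= j x] [Dj Fjx]; exists j.
- move=> [/= j1 x1] [/= j2 x2]; rewrite !in_setE /= => -[D1 F1] [D2 F2] x12.
  by subst x2; congr (_, _); exact: (Fdisj j1 j2 x1).
- by move=> x [j Dj Fjx] /=; exists (j, x).
Qed.

End EsumLemmas.

Section Fibers.
Local Open Scope classical_set_scope.
Variable n : nat.
Implicit Types (a b : {set 'I_n}) (x y z : outcome n).

Definition fiber a y : set (outcome n) := [set x | forall i, i \in a -> x i = y i].

Definition codes a : set (outcome n) := [set y | forall i, i \notin a -> y i = 0%N].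

Definition restrict a x : outcome n := [ffun i => if i \in a then x i else 0%N].

Lemma restrict_codes a x : codes a (restrict a x).
Proof. by move=> i /negPf ia; rewrite ffunE ia. Qed.

Lemma fiber_restrict a x : fiber a (restrict a x) x.
Proof. by move=> i ia; rewrite ffunE ia. Qed.

Lemma fiber_subset a b x z : a \subset b -> fiber b z x -> fiber a z x.
Proof. by move=> /subsetP ab xz i /ab; apply: xz. Qed.

Lemma codes_fiber_uniq a x y z :
  codes a y -> codes a z -> fiber a y x -> fiber a z x -> y = z.
Proof.
move=> cy cz xy xz; apply/ffunP => i; case: (boolP (i \in a)) => ia.
  by rewrite -xy // xz.
by rewrite cy // cz.
Qed.

Lemma esum_fibers (R : realType) S a (g : outcome n -> \bar R) :
  (forall x, 0 <= g x)%E ->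
  (\esum_(x in S) g x = \esum_(y in codes a) \esum_(x in S `&` fiber a y) g x)%E.
Proof.
move=> g0; rewrite -esum_bigcup_disjoint //; last first.
  by move=> y z x cy cz [_ xy] [_ xz]; exact: (codes_fiber_uniq cy cz xy xz).
congr esum; apply/seteqP; split => [x Sx|x [y _ []] //].
by exists (restrict a x); [exact: restrict_codes | split; last exact: fiber_restrict].
Qed.

End Fibers.

Section EntropyPolymatroid.
Local Open Scope classical_set_scope.
Variables (R : realType) (n : nat) (p : outcome n -> R).
Hypothesis p_ge0 : forall x, 0 <= p x.
Hypothesis p_sum1 : (\esum_(x in [set: outcome n]) (p x)%:E = 1)%E.
Implicit Types (a b A B : {set 'I_n}) (S : set (outcome n)) (x y z u : outcome n).

Lemma esum_pmf_ge0 S : (0 <= \esum_(x in S) (p x)%:E)%E.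
Proof. by apply: esum_ge0 => x _; rewrite lee_fin. Qed.

Lemma esum_pmf_le1 S : (\esum_(x in S) (p x)%:E <= 1)%E.
Proof. by rewrite -p_sum1 le_esum_subset // => x; rewrite lee_fin. Qed.

Lemma margE a y : (marg p a y)%:E = (\esum_(x in fiber a y) (p x)%:E)%E.
Proof.
rewrite /marg fineK // ge0_fin_numE ?esum_pmf_ge0 //.
exact: le_lt_trans (esum_pmf_le1 _) (ltry 1).
Qed.

Lemma marg_ge0 a y : 0 <= marg p a y.
Proof. by rewrite -lee_fin margE esum_pmf_ge0. Qed.

Lemma marg_le1 a y : marg p a y <= 1.
Proof. by rewrite -lee_fin margE esum_pmf_le1. Qed.

Lemma marg_fiber a b x z : a \subset b -> fiber b z x -> marg p a x = marg p a z.
Proof.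
move=> ab /(fiber_subset ab) xz; apply: EFin_inj; rewrite !margE; congr esum.
by apply/seteqP; split => w /= wx i ia; rewrite wx // xz.
Qed.

Lemma marg_subset a b x : a \subset b -> marg p b x <= marg p a x.
Proof.
move=> ab; rewrite -lee_fin !margE; apply: le_esum_subset => [w|w].
  exact: fiber_subset.
by rewrite lee_fin.
Qed.

Lemma pmf_le_marg a x : p x <= marg p a x.
Proof.
rewrite -lee_fin margE -[leLHS](@esum_set1 _ _ x (fun w => (p w)%:E)) ?lee_fin //.
by apply: le_esum_subset => [w -> //|w]; rewrite lee_fin.
Qed.

Lemma marg_gt0 a x : 0 < p x -> 0 < marg p a x.
Proof. by move=> px; apply: lt_le_trans px (pmf_le_marg a x). Qed.

Lemma esum_pmf_marg a (g : outcome n -> R) :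
  (forall x, 0 <= g x) -> (forall x z, fiber a z x -> g x = g z) ->
  (\esum_(x in [set: outcome n]) (p x * g x)%:E =
   \esum_(y in codes a) (marg p a y * g y)%:E)%E.
Proof.
move=> g0 gfib; rewrite (esum_fibers _ a); last by move=> x; rewrite lee_fin mulr_ge0.
apply: eq_esum => y _; rewrite classical_sets.setTI.
rewrite (eq_esum (b := fun x => ((g y)%:E * (p x)%:E)%E)); last first.
  by move=> x /gfib ->; rewrite -EFinM mulrC.
by rewrite ge0_esumZl // -margE -EFinM mulrC.
Qed.

Definition surprisal a x := - ln (marg p a x).

Lemma surprisal_ge0 a x : 0 <= surprisal a x.
Proof. by rewrite oppr_ge0 ln_le0 // marg_le1. Qed.

Lemma entropyE a :
  entropy p a = (\esum_(x in [set: outcome n]) (p x * surprisal a x)%:E)%E.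
Proof.
rewrite (@esum_pmf_marg a) => [|x|x z xz]; last by rewrite /surprisal (marg_fiber (subxx a) xz).
- by apply: eq_esum => y _; rewrite /surprisal mulrN.
- exact: surprisal_ge0.
Qed.

Lemma entropy_ge0 a : (0 <= entropy p a)%E.
Proof.
by rewrite entropyE; apply: esum_ge0 => x _; rewrite lee_fin mulr_ge0 ?surprisal_ge0.
Qed.

Lemma entropy_set0 : entropy p set0 = 0%E.
Proof.
rewrite entropyE esum1 // => x _; rewrite /surprisal.
suff -> : marg p set0 x = 1 by rewrite ln1 oppr0 mulr0.
apply: EFin_inj; rewrite margE -p_sum1; congr esum.
by apply/seteqP; split => w // _ i; rewrite in_set0.
Qed.

Lemma entropy_mono a b : a \subset b -> (entropy p a <= entropy p b)%E.
Proof.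
move=> ab; rewrite !entropyE; apply: le_esum => x _; rewrite lee_fin.
have [->|px0] := eqVneq (p x) 0; first by rewrite !mul0r.
have px : 0 < p x by rewrite lt0r px0 p_ge0.
by rewrite ler_wpM2l // lerN2 ler_ln ?posrE ?marg_gt0 ?marg_subset.
Qed.

Definition markov_ratio A B x :=
  marg p A x * marg p B x / (marg p (A :&: B) x * marg p (A :|: B) x).

Lemma markov_ratio_ge0 A B x : 0 <= markov_ratio A B x.
Proof. by rewrite divr_ge0 ?mulr_ge0 ?marg_ge0. Qed.

Lemma surprisal_submod A B x : 0 < p x ->
  surprisal (A :|: B) x + surprisal (A :&: B) x + 1 <=
  surprisal A x + surprisal B x + markov_ratio A B x.
Proof.
move=> px; have mpos c : 0 < marg p c x := marg_gt0 c px.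
have ln_ratio : ln (markov_ratio A B x) = ln (marg p A x) + ln (marg p B x)
    - ln (marg p (A :&: B) x) - ln (marg p (A :|: B) x).
  by rewrite ln_div ?posrE ?mulr_gt0 // !lnM ?posrE // opprD addrA.
have ln_le : ln (markov_ratio A B x) <= markov_ratio A B x - 1.
  have r_gt0 : 0 < markov_ratio A B x by rewrite divr_gt0 ?mulr_gt0.
  by rewrite -[X in ln X](subrKC 1) le_ln1Dx //; lra.
by move: ln_le; rewrite ln_ratio /surprisal; lra.
Qed.

Lemma esum_marg_extensions A B u :
  (\esum_(z in codes (A :|: B) `&` fiber A u) (marg p B z)%:E <=
   (marg p (A :&: B) u)%:E)%E.
Proof.
under eq_esum => z _ do rewrite margE.
rewrite -esum_bigcup_disjoint => [|j k x [cj ju] [ck ku] xj xk|x]; last 2 first.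
- apply/ffunP => i; case: (boolP (i \in B)) => iB; first by rewrite -xj // xk.
  case: (boolP (i \in A)) => iA; first by rewrite ju // ku.
  by rewrite cj ?ck // in_setU negb_or iA iB.
- by rewrite lee_fin.
rewrite margE; apply: le_esum_subset => [x [z [_ zu] xz] i|x]; last by rewrite lee_fin.
by rewrite in_setI => /andP[iA iB]; rewrite xz // zu.
Qed.

Lemma esum_markov_le1 A B :
  (\esum_(z in codes (A :|: B))
     (marg p A z * marg p B z / marg p (A :&: B) z)%:E <= 1)%E.
Proof.
rewrite (esum_fibers _ A) => [|z]; last by rewrite lee_fin divr_ge0 ?mulr_ge0 ?marg_ge0.
apply: (@le_trans _ _ (\esum_(u in codes A) (marg p A u)%:E)%E); last first.
  rewrite -p_sum1 [leRHS](esum_fibers _ A) => [|x]; last by rewrite lee_fin.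
  by apply: le_esum => u _; rewrite classical_sets.setTI -margE.
apply: le_esum => u _.
pose c := marg p A u / marg p (A :&: B) u.
have c_ge0 : 0 <= c by rewrite divr_ge0 ?marg_ge0.
rewrite (eq_esum (b := fun z => (c%:E * (marg p B z)%:E)%E)); last first.
  move=> z [_ zu]; rewrite -EFinM /c mulrAC.
  by rewrite (marg_fiber (subxx A) zu) (marg_fiber (subsetIl A B) zu).
rewrite ge0_esumZl // => [|z]; last by rewrite lee_fin marg_ge0.
apply: le_trans (lee_wpmul2l _ (esum_marg_extensions A B u)) _; first by rewrite lee_fin.
rewrite -EFinM lee_fin /c.
have [->|mAB_neq0] := eqVneq (marg p (A :&: B) u) 0; first by rewrite mulr0 marg_ge0.
by rewrite divfK.
Qed.

Lemma esum_markov_ratio_le1 A B :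
  (\esum_(x in [set: outcome n]) (p x * markov_ratio A B x)%:E <= 1)%E.
Proof.
rewrite (@esum_pmf_marg (A :|: B)) => [|x|x z xz]; last 2 first.
- exact: markov_ratio_ge0.
- have eq_marg (c : {set 'I_n}) : c \subset A :|: B -> marg p c x = marg p c z.
    by move=> cAB; apply: marg_fiber cAB xz.
  rewrite /markov_ratio !eq_marg ?subsetUl ?subsetUr //.
  exact: subset_trans (subsetIl A B) (subsetUl A B).
apply: le_trans (esum_markov_le1 A B); apply: le_esum => z _; rewrite lee_fin.
have [->|mAuB_neq0] := eqVneq (marg p (A :|: B) z) 0.
  by rewrite mul0r divr_ge0 ?mulr_ge0 ?marg_ge0.
by rewrite /markov_ratio mulrC invfM mulrA mulfVK.
Qed.

Lemma entropy_submod A B :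
  (entropy p (A :|: B) + entropy p (A :&: B) <= entropy p A + entropy p B)%E.
Proof.
rewrite -(@leeD2rE _ 1) //.
apply: le_trans (leeD2l _ (esum_markov_ratio_le1 A B)).
rewrite -[X in (_ + X <= _)%E]p_sum1 !entropyE -!esumD; first last.
all: try by move=> x _; do ?apply: adde_ge0; rewrite lee_fin;
  do ?[exact: p_ge0 | exact: surprisal_ge0 | exact: markov_ratio_ge0 | apply: mulr_ge0].
apply: le_esum => x _; rewrite -!EFinD lee_fin.
have [->|px0] := eqVneq (p x) 0; first by rewrite !mul0r !addr0.
have px : 0 < p x by rewrite lt0r px0 p_ge0.
by have := ler_wpM2l (ltW px) (surprisal_submod A B px); rewrite !mulrDr mulr1.
Qed.

Lemma entropy_subadd A B : (entropy p (A :|: B) <= entropy p A + entropy p B)%E.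
Proof. exact: le_trans (leeDl _ (entropy_ge0 (A :&: B))) (entropy_submod A B). Qed.

Hypothesis entropy1_fin : forall i, (entropy p [set i] < +oo)%E.

Lemma entropy_fin a : (entropy p a < +oo)%E.
Proof.
have a_cover : (\bigcup_(i in a) [set i])%SET = a.
  by apply/setP => i; apply/bigcupP/idP => [[j ja /set1P -> //]|ia]; exists i; rewrite ?set11.
rewrite -a_cover.
apply: (big_ind (fun b => entropy p b < +oo)%E) => [|b c bfin cfin|i _].
- by rewrite entropy_set0 ltry.
- exact: le_lt_trans (entropy_subadd b c) (lte_add_pinfty bfin cfin).
- exact: entropy1_fin.
Qed.

Lemma entropy_fineK a : (fine (entropy p a))%:E = entropy p a.
Proof. by rewrite fineK // ge0_fin_numE ?entropy_ge0 ?entropy_fin. Qed.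

Lemma entropy_polymatroid : polymatroid (fine \o entropy p).
Proof.
split => [|A B AB|A B] /=; first by rewrite entropy_set0.
  by rewrite -lee_fin !entropy_fineK entropy_mono.
by rewrite -lee_fin !EFinD !entropy_fineK entropy_submod.
Qed.

Lemma valid_deficiency K :
  valid p K <-> deficiency (contract (fine \o entropy p) K.1) K.2 = 0.
Proof.
case: K => C s; rewrite /valid /cond_entropy /deficiency /contract /=.
under eq_bigr => Q _ do rewrite -(entropy_fineK (Q :|: C)) -(entropy_fineK C) -EFinB.
rewrite sumEFin -(entropy_fineK (_ :|: C)) -(entropy_fineK C) -EFinB.
by split => [[]|->].
Qed.

End EntropyPolymatroid.

Theorem mainTheorem4 (R : realType) (n : nat) (K : CMI n) :
  pure_form K -> cmi_equiv R K (can K).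
Proof.
move=> _ p [[p_ge0 p_sum1] entropy1_fin].
have condP C := polymatroid_contract C (entropy_polymatroid p_ge0 p_sum1 entropy1_fin).
rewrite !(valid_deficiency p_ge0 p_sum1 entropy1_fin).
have [small|big] := leqP (size K.2) 1.
  by rewrite can_degenerate // !(deficiency_small (polymatroid0 (condP _))).
by rewrite can_fst //; apply: deficiency0_can (condP _) big.
Qed.
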